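(* Let $A,A^*$ be a Leonard pair in $\mathcal A$. Then there exists a unique antiautomorphism $\dagger$ of $\mathcal A$ (i.e. a $\mathbb K$-linear bijection $\mathcal A\to\mathcal A$ with $(XY)^\dagger=Y^\dagger X^\dagger$ for all $X,Y$) such that $A^\dagger=A$ and $A^{*\dagger}=A^*$. Moreover $X^{\dagger\dagger}=X$ for all $X\in\mathcal A$.
   Context: Let $\mathbb K$ be a field, $d\ge0$ an integer, and $\mathcal A$ a $\mathbb K$-algebra isomorphic to $\mathrm{Mat}_{d+1}(\mathbb K)$; let $V$ be an irreducible (left) $\mathcal A$-module (so $\dim V=d+1$). A square matrix is tridiagonal if every nonzero entry lies on the diagonal, subdiagonal or superdiagonal; a tridiagonal matrix is irreducible if all its subdiagonal and superdiagonal entries are nonzero. A Leonard pair in $\mathcal A$ is an ordered pair $A,A^*$ of elements of $\mathcal A$ such that (i) there is a basis of $V$ with respect to which the matrix representing $A$ is irreducible tridiagonal and the matrix representing $A^*$ is diagonal, and (ii) there is a basis of $V$ with respect to which the matrix representing $A$ is diagonal and the matrix representing $A^*$ is irreducible tridiagonal. *)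

From HB Require Import structures.
From mathcomp Require Import all_boot all_order all_algebra.
Set Implicit Arguments. Unset Strict Implicit. Unset Printing Implicit Defensive.
Import GRing.Theory.
Local Open Scope ring_scope.

(* We take the algebra A := 'M[K]_(d.+1) and its irreducible module
   V := 'cV[K]_(d.+1) (column vectors, A acting by left multiplication).
   A basis of V is given by the columns of an invertible matrix P; the matrix
   representing X in that basis is (invmx P) *m X *m P. *)

Definition tridiagonal (K : fieldType) (n : nat) (M : 'M[K]_n) : Prop :=
  forall i j : 'I_n, (i.+1 < j)%N \/ (j.+1 < i)%N -> M i j = 0.

Definition irred_tridiagonal (K : fieldType) (n : nat) (M : 'M[K]_n) : Prop :=
  tridiagonal M /\
  forall i j : 'I_n, (nat_of_ord j = i.+1)%N -> M i j != 0 /\ M j i != 0.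

Definition diagonal (K : fieldType) (n : nat) (M : 'M[K]_n) : Prop :=
  is_diag_mx M.

Definition leonard_pair (K : fieldType) (d : nat) (A As : 'M[K]_d.+1) : Prop :=
  (exists P : 'M[K]_d.+1, P \in unitmx /\
      irred_tridiagonal (invmx P *m A *m P) /\ diagonal (invmx P *m As *m P)) /\
  (exists Q : 'M[K]_d.+1, Q \in unitmx /\
      diagonal (invmx Q *m A *m Q) /\ irred_tridiagonal (invmx Q *m As *m Q)).

Definition antiautomorphism (K : fieldType) (n : nat) (f : 'M[K]_n -> 'M[K]_n) : Prop :=
  (forall (a : K) (X Y : 'M[K]_n), f (a *: X + Y) = a *: f X + f Y) /\
  bijective f /\
  (forall X Y : 'M[K]_n, f (X *m Y) = f Y *m f X).

From HB Require Import structures.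
From mathcomp Require Import all_boot all_order all_algebra.
From mathcomp Require Import zify.
Set Implicit Arguments. Unset Strict Implicit. Unset Printing Implicit Defensive.
Import GRing.Theory.
Local Open Scope ring_scope.

(* Write A = P T P^-1 and A* = P D P^-1 with T irreducible tridiagonal and D
   diagonal.  The entries of D are distinct, since A* is also similar to an
   irreducible tridiagonal matrix, whose eigenspaces are lines.  A diagonal
   invertible H with H T = T^T H exists, and the adjoint for the symmetric
   bilinear form of Gram matrix P^-T H P^-1 is an involutive antiautomorphism
   fixing A and A*.  It is unique because A and A* generate the whole matrix
   algebra: polynomials in D give the diagonal matrix units E_ii, the products
   E_ii T E_jj give the adjacent E_ij, and these generate all E_ij; two
   antiautomorphisms agree on a subalgebra. *)

Section LinearAxiom.
Variables (R : pzRingType) (U V : lmodType R) (f : U -> V).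
Hypothesis f_lin : forall a x y, f (a *: x + y) = a *: f x + f y.

Lemma lin_axiom0 : f 0 = 0.
Proof.
have := f_lin 1 0 0; rewrite scale1r addr0 scale1r => f0.
by apply: (addrI (f 0)); rewrite addr0 -f0.
Qed.

Lemma lin_axiomD x y : f (x + y) = f x + f y.
Proof. by rewrite -[x in x + _]scale1r f_lin scale1r. Qed.

Lemma lin_axiomZ a x : f (a *: x) = a *: f x.
Proof. by rewrite -[a *: x]addr0 f_lin lin_axiom0 addr0. Qed.
End LinearAxiom.

Lemma antiautomorphism1 (K : fieldType) (n : nat) (f : 'M[K]_n -> 'M[K]_n) :
  antiautomorphism f -> f 1%:M = 1%:M.
Proof.
case=> _ [[g fK gK] f_mul].
by have := f_mul (g 1%:M) 1%:M; rewrite mulmx1 gK mulmx1.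
Qed.

(* [form_adjoint N X] is the adjoint of [X] for the bilinear form
   [(u, v) |-> u^T N v]. *)
Definition form_adjoint (K : fieldType) (n : nat) (N X : 'M[K]_n) : 'M[K]_n :=
  invmx N *m X^T *m N.

Section FormAdjoint.
Variables (K : fieldType) (n : nat) (N : 'M[K]_n).
Hypothesis N_unit : N \in unitmx.

Lemma form_adjoint_id X : X^T *m N = N *m X -> form_adjoint N X = X.
Proof. by move=> XN; rewrite /form_adjoint -mulmxA XN mulKmx. Qed.

Hypothesis N_sym : N^T = N.

Lemma form_adjointK : involutive (form_adjoint N).
Proof.
move=> X; rewrite /form_adjoint !trmx_mul trmxK N_sym trmx_inv N_sym.
by rewrite !mulmxA mulVmx // mul1mx mulmxKV.
Qed.

Lemma form_adjoint_antiautomorphism : antiautomorphism (form_adjoint N).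
Proof.
split; [|split].
- move=> a X Y; rewrite /form_adjoint linearD linearZ /=.
  by rewrite mulmxDr mulmxDl -scalemxAr -scalemxAl.
- exact: inv_bij form_adjointK.
- move=> X Y; rewrite /form_adjoint trmx_mul.
  by rewrite !mulmxA mulmxK.
Qed.
End FormAdjoint.

Lemma form_sym_conj (K : fieldType) (n : nat) (P H M : 'M[K]_n) :
  P \in unitmx ->
  (invmx P *m M *m P)^T *m H = H *m (invmx P *m M *m P) ->
  M^T *m ((invmx P)^T *m H *m invmx P) = ((invmx P)^T *m H *m invmx P) *m M.
Proof.
move=> P_unit; rewrite !trmx_mul trmx_inv !mulmxA.
move/(congr1 (fun Y => invmx P^T *m Y *m invmx P)).
by rewrite !mulmxA mulVmx ?unitmx_tr // mul1mx mulmxK.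
Qed.

Section IrredTridiagonal.
Variables (K : fieldType) (n : nat) (T : 'M[K]_n.+1).
Hypothesis T_irr : irred_tridiagonal T.

(* Row [k] of [T w = lam w] determines [w_(k+1)] from [w_0, ..., w_k],
   because the superdiagonal entry [T_(k,k+1)] is nonzero. *)
Lemma irred_tridiagonal_eigenvector_eq0 (w : 'cV[K]_n.+1) (lam : K) :
  T *m w = lam *: w -> w ord0 0 = 0 -> w = 0.
Proof.
have [T_tri T_nz] := T_irr; move=> Tw w0.
suff w_eq0 k (m : 'I_n.+1) : (m <= k)%N -> w m 0 = 0.
  by apply/matrixP => m z; rewrite (ord1 z) mxE (w_eq0 m).
elim: k m => [|k IHk] m.
  by rewrite leqn0 => /eqP m0; rewrite (_ : m = ord0) //; apply/val_inj.
rewrite leq_eqVlt ltnS => /orP [/eqP mk|]; last exact: IHk.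
have kn : (k < n.+1)%N by rewrite (leq_trans _ (ltn_ord m)) // mk.
pose k' : 'I_n.+1 := Ordinal kn.
have := congr1 (fun v : 'cV[K]_n.+1 => v k' 0) Tw.
rewrite !mxE (IHk k') // mulr0 (bigD1 m) //= big1 ?addr0.
  by move/eqP; rewrite mulf_eq0 (negPf (T_nz k' m mk).1) => /eqP.
move=> l lm; case: (leqP l k) => lk; first by rewrite (IHk l lk) mulr0.
rewrite T_tri ?mul0r //; left => /=.
by move: lm; rewrite -(inj_eq val_inj) /= mk => lm; lia.
Qed.

Lemma irred_tridiagonal_diag_similar_distinct (R : 'M[K]_n.+1) (d : 'rV[K]_n.+1) :
  R \in unitmx -> T *m R = R *m diag_mx d ->
  forall i j, i != j -> d 0 i != d 0 j.
Proof.
move=> R_unit TR i j ij; apply/eqP => dij.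
have R_inj (v : 'cV[K]_n.+1) : R *m v = 0 -> v = 0.
  by move=> Rv; rewrite -(mulKmx R_unit v) Rv mulmx0.
have T_col k : T *m col k R = d 0 k *: col k R.
  rewrite !colE mulmxA TR -mulmxA scalemxAr mul_diag_mx; congr (R *m _).
  apply/matrixP => a b; rewrite !mxE.
  by case: (eqVneq a k) => [->|]; rewrite ?mulr1 ?mulr0.
(* If [d_i = d_j], columns [i] and [j] of [R] span a plane of eigenvectors
   of [T], containing a nonzero one with first coordinate 0. *)
pose v := R ord0 j *: delta_mx i 0 - R ord0 i *: delta_mx j 0 : 'cV[K]_n.+1.
have Tv : T *m (R *m v) = d 0 i *: (R *m v).
  rewrite mulmxBr -!scalemxAr -!colE mulmxBr -!scalemxAr !T_col dij.
  by rewrite scalerBr !scalerA [d 0 j * _]mulrC [d 0 j * R _ _]mulrC.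
have Rv0 : (R *m v) ord0 0 = 0.
  by rewrite mulmxBr -!scalemxAr -!colE !mxE mulrC subrr.
have v0 : v = 0 by apply/R_inj/(irred_tridiagonal_eigenvector_eq0 Tv).
have R0i : R ord0 i = 0.
  apply/eqP; rewrite -oppr_eq0; apply/eqP.
  have := congr1 (fun w : 'cV[K]_n.+1 => w j 0) v0.
  by rewrite !mxE !eqxx eq_sym (negPf ij) !mulr0 mulr1 sub0r.
have : col i R = 0.
  by apply: (irred_tridiagonal_eigenvector_eq0 (T_col i)); rewrite mxE.
rewrite colE => /R_inj /(congr1 (fun w : 'cV[K]_n.+1 => w i 0)).
by rewrite !mxE !eqxx => /eqP; rewrite oner_eq0.
Qed.

Fixpoint symmetrizer_coef (k : nat) : K :=
  if k is k'.+1 then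
    symmetrizer_coef k' * T (inord k') (inord k'.+1) / T (inord k'.+1) (inord k')
  else 1.

Lemma symmetrizer_coef_neq0 k : (k < n.+1)%N -> symmetrizer_coef k != 0.
Proof.
elim: k => [|k IHk] kn /=; first exact: oner_neq0.
have [Tup Tlo] := T_irr.2 (inord k) (inord k.+1) ltac:(by rewrite !inordK // ltnW).
by rewrite mulf_neq0 ?invr_eq0 // mulf_neq0 // IHk // ltnW.
Qed.

Lemma symmetrizer_coef_adj (i j : 'I_n.+1) : val j = (val i).+1 ->
  T j i * symmetrizer_coef j = symmetrizer_coef i * T i j.
Proof.
move=> ji; rewrite ji /=.
have -> : inord i = i by rewrite inord_val.
have -> : inord i.+1 = j by apply: val_inj; rewrite /= inordK -ji ?ltn_ord.
by rewrite [LHS]mulrC divfK //; have [] := T_irr.2 i j ji.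
Qed.

Lemma irred_tridiagonal_symmetrizable :
  exists2 h : 'rV[K]_n.+1, (forall i, h 0 i != 0) &
    T^T *m diag_mx h = diag_mx h *m T.
Proof.
exists (\row_i symmetrizer_coef i) => [i|]; first by rewrite mxE symmetrizer_coef_neq0.
rewrite mul_mx_diag mul_diag_mx; apply/matrixP => i j; rewrite !mxE.
have [->|ij] := eqVneq i j; first by rewrite mulrC.
have [ji|ji] := eqVneq (val j) (val i).+1; first exact: symmetrizer_coef_adj.
have [ij'|ij'] := eqVneq (val i) (val j).+1.
  by rewrite mulrC -symmetrizer_coef_adj // mulrC.
move: ij ji ij'; rewrite -(inj_eq val_inj) /= => ij ji ij'.
by rewrite !T_irr.1 ?mulr0 ?mul0r //; lia.
Qed.
End IrredTridiagonal.

Lemma horner_mx_diag_lagrange (K : fieldType) (n : nat) (d : 'rV[K]_n.+1) i :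
  (forall k, k != i -> d 0 k != d 0 i) ->
  horner_mx (diag_mx d) (\prod_(k | k != i) ((d 0 i - d 0 k)^-1 *: ('X - (d 0 k)%:P)))
  = delta_mx i i.
Proof.
move=> d_inj; rewrite horner_mx_diag; apply/matrixP => a b; rewrite !mxE horner_prod.
have [<-|ab] := eqVneq a b; last first.
  by rewrite mulr0n; case: (eqVneq a i) ab => [-> ib|//]; rewrite eq_sym (negPf ib).
rewrite mulr1n andbb; under eq_bigr do rewrite hornerZ hornerXsubC.
have [->|ai] := eqVneq a i.
  by rewrite big1 // => k ki; rewrite mulVf // subr_eq0 eq_sym d_inj.
by rewrite (bigD1 a) //= subrr mulr0 mul0r.
Qed.

Lemma mul_delta_mx_delta (K : fieldType) (n : nat) (M : 'M[K]_n) (i j : 'I_n) :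
  delta_mx i i *m M *m delta_mx j j = M i j *: delta_mx i j.
Proof.
apply/matrixP => a b; rewrite !mxE (bigD1 j) //= big1 ?addr0; last first.
  by move=> k /negPf kj; rewrite !mxE kj andFb mulr0.
rewrite !mxE eqxx /= (bigD1 i) //= big1 ?addr0; last first.
  by move=> k /negPf ki; rewrite !mxE ki andbF mul0r.
rewrite !mxE eqxx andbT.
by case: (a == i); case: (b == j); rewrite /= ?mul1r ?mulr1 ?mul0r ?mulr0.
Qed.

Definition mx_subalg_closed (K : fieldType) (n : nat) (S : 'M[K]_n -> Prop) :=
  [/\ S 1%:M, forall X Y, S X -> S Y -> S (X + Y),
      forall a X, S X -> S (a *: X) & forall X Y, S X -> S Y -> S (X *m Y)].

Section Generation.
Variables (K : fieldType) (n : nat) (S : 'M[K]_n.+1 -> Prop).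
Hypothesis S_closed : mx_subalg_closed S.

Lemma mx_subalg0 : S 0.
Proof. by have [S1 _ SZ _] := S_closed; rewrite -(scale0r 1%:M); apply: SZ. Qed.

Lemma mx_subalg_horner (D : 'M[K]_n.+1) p : S D -> S (horner_mx D p).
Proof.
have [S1 SD SZ SM] := S_closed => S_D.
elim/poly_ind: p => [|p c IHp]; first by rewrite rmorph0; apply: mx_subalg0.
rewrite rmorphD rmorphM /= horner_mx_X horner_mx_C -scalemx1.
by apply: SD; [apply: SM | apply: SZ].
Qed.

Lemma mx_subalg_delta (T : 'M[K]_n.+1) (d : 'rV[K]_n.+1) :
  irred_tridiagonal T -> (forall i j, i != j -> d 0 i != d 0 j) ->
  S T -> S (diag_mx d) -> forall i j, S (delta_mx i j).
Proof.
move=> [_ T_nz] d_inj S_T S_d; have [_ _ SZ SM] := S_closed.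
have S_diag i : S (delta_mx i i).
  rewrite -(horner_mx_diag_lagrange (d := d)); first exact: mx_subalg_horner.
  by move=> k; apply: d_inj.
have S_adj (i j : 'I_n.+1) : val j = (val i).+1 ->
    S (delta_mx i j) /\ S (delta_mx j i).
  move=> ji; have [Tij Tji] := T_nz i j ji.
  rewrite -[delta_mx i j](scalerK Tij) -[delta_mx j i](scalerK Tji).
  by rewrite -!mul_delta_mx_delta; split; apply/SZ/SM/S_diag/SM.
suff S_dist k (i j : 'I_n.+1) : val j = (i + k)%N ->
    S (delta_mx i j) /\ S (delta_mx j i).
  move=> i j; case: (leqP i j) => ij.
    by have [] := S_dist (j - i)%N i j (esym (subnKC ij)).
  by have [] := S_dist (i - j)%N j i (esym (subnKC (ltnW ij))).
elim: k i j => [|k IHk] i j ji.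
  by rewrite addn0 in ji; rewrite (_ : j = i) ?S_diag //; apply/val_inj.
have ikn : (i + k < n.+1)%N by rewrite (leq_trans _ (ltn_ord j)) // ji addnS.
pose j' : 'I_n.+1 := Ordinal ikn.
have [S_ij' S_j'i] := IHk i j' erefl.
have [S_j'j S_jj'] := S_adj j' j ltac:(by rewrite ji addnS).
by rewrite -(mul_delta_mx j' i j) -(mul_delta_mx j' j i); split; apply: SM.
Qed.

Lemma mx_subalg_full (T : 'M[K]_n.+1) (d : 'rV[K]_n.+1) :
  irred_tridiagonal T -> (forall i j, i != j -> d 0 i != d 0 j) ->
  S T -> S (diag_mx d) -> forall X, S X.
Proof.
move=> T_irr d_inj S_T S_d X; have [_ SD SZ _] := S_closed.
rewrite (matrix_sum_delta X).
apply: (big_ind S) => [|//|i _]; first exact: mx_subalg0.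
apply: (big_ind S) => [|//|j _]; first exact: mx_subalg0.
by apply/SZ/(mx_subalg_delta T_irr d_inj).
Qed.
End Generation.

Lemma mx_subalg_closed_conj (K : fieldType) (n : nat) (P : 'M[K]_n)
    (S : 'M[K]_n -> Prop) :
  P \in unitmx -> mx_subalg_closed S ->
  mx_subalg_closed (fun Y => S (P *m Y *m invmx P)).
Proof.
move=> P_unit [S1 SD SZ SM]; split=> [|X Y SX SY|a X SX|X Y SX SY].
- by rewrite mulmx1 mulmxV.
- by rewrite mulmxDr mulmxDl; apply: SD.
- by rewrite -scalemxAr -scalemxAl; apply: SZ.
- have -> : P *m (X *m Y) *m invmx P = (P *m X *m invmx P) *m (P *m Y *m invmx P).
    by rewrite !mulmxA mulmxKV.
  exact: SM.
Qed.

Lemma antiautomorphism_eq_subalg (K : fieldType) (n : nat)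
    (f g : 'M[K]_n -> 'M[K]_n) :
  antiautomorphism f -> antiautomorphism g ->
  mx_subalg_closed (fun X => f X = g X).
Proof.
move=> f_anti g_anti.
have [f_lin [_ f_mul]] := f_anti; have [g_lin [_ g_mul]] := g_anti.
split=> [|X Y fgX fgY|a X fgX|X Y fgX fgY].
- by rewrite !antiautomorphism1.
- by rewrite (lin_axiomD f_lin) (lin_axiomD g_lin) fgX fgY.
- by rewrite (lin_axiomZ f_lin) (lin_axiomZ g_lin) fgX.
- by rewrite f_mul g_mul fgX fgY.
Qed.

Theorem theorem6p1 (K : fieldType) (d : nat) (A As : 'M[K]_d.+1) :
  leonard_pair A As ->
  exists f : 'M[K]_d.+1 -> 'M[K]_d.+1,
    [/\ antiautomorphism f, f A = A, f As = As,
        (forall g : 'M[K]_d.+1 -> 'M[K]_d.+1,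
            antiautomorphism g -> g A = A -> g As = As -> forall X, g X = f X)
      & forall X, f (f X) = X].
Proof.
move=> [[P [P_unit [T_irr /diag_mxP [e De]]]] [Q [Q_unit [_ As_irr]]]].
have e_inj : forall i j, i != j -> e 0 i != e 0 j.
  apply: (irred_tridiagonal_diag_similar_distinct As_irr (R := invmx Q *m P)).
    by rewrite unitmx_mul unitmx_inv Q_unit.
  by rewrite -De !mulmxA !mulmxK.
have [h h_neq0 Th] := irred_tridiagonal_symmetrizable T_irr.
pose N := (invmx P)^T *m diag_mx h *m invmx P.
have N_unit : N \in unitmx.
  rewrite !unitmx_mul unitmx_tr unitmx_inv P_unit unitmxE unitfE det_diag andbT.
  by apply/prodf_neq0 => i _; apply: h_neq0.
have N_sym : N^T = N by rewrite !trmx_mul trmxK tr_diag_mx mulmxA.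
have f_anti := form_adjoint_antiautomorphism N_unit N_sym.
have fA : form_adjoint N A = A by apply/form_adjoint_id/form_sym_conj.
have fAs : form_adjoint N As = As.
  by apply/form_adjoint_id/form_sym_conj; rewrite // De tr_diag_mx diag_mxC.
exists (form_adjoint N); split=> // [g g_anti gA gAs X|]; last exact: form_adjointK.
have S_closed :=
  mx_subalg_closed_conj P_unit (antiautomorphism_eq_subalg g_anti f_anti).
have conjK Y : P *m (invmx P *m Y *m P) *m invmx P = Y.
  by rewrite !mulmxA mulmxV // mul1mx mulmxK.
have := mx_subalg_full S_closed T_irr e_inj _ _ (invmx P *m X *m P).
by rewrite -De !conjK gA gAs fA fAs; apply.
Qed.
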